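(* Let $A,B\in M_n(\mathbb{R}_+)$ be triangularizable projector matrices (i.e. $A^2=A$ and $B^2=B$). If the max commutator $C=[A,B]_\oplus = AB\oplus BA$ is nilpotent, then $A$ and $B$ are simultaneously triangularizable.
   Context: Max algebra: $\mathbb{R}_+$ the nonnegative reals with $a\oplus b=\max\{a,b\}$ and ordinary multiplication; for $A,B\in M_n(\mathbb{R}_+)$, $(AB)_{ij}=\max_k a_{ik}b_{kj}$ and $(A\oplus B)_{ij}=\max\{a_{ij},b_{ij}\}$; all powers and products are in this sense. A matrix is nilpotent if some power is $0$. $GL_n(\mathbb{R}_+)$ is the set of matrices invertible under this product (the generalized permutation matrices). $A$ is triangularizable if $P^{-1}AP$ is upper triangular for some $P\in GL_n(\mathbb{R}_+)$; $A,B$ are simultaneously triangularizable if one $P\in GL_n(\mathbb{R}_+)$ makes both $P^{-1}AP$ and $P^{-1}BP$ upper triangular. *)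

From mathcomp Require Import all_boot all_order all_algebra.
From mathcomp Require Import reals.
Set Implicit Arguments. Unset Strict Implicit. Unset Printing Implicit Defensive.
Import Order.TTheory GRing.Theory Num.Theory.
Local Open Scope ring_scope.

Section MaxAlgebra.
Variables (R : realType) (n : nat).

Definition nonneg_mx (A : 'M[R]_n) : Prop := forall i j, 0 <= A i j.

(* max-algebra product: (AB)_ij = max_k a_ik b_kj (entries are nonnegative,
   so 0 is a neutral start for the max) *)
Definition maxmul (A B : 'M[R]_n) : 'M[R]_n :=
  \matrix_(i, j) \big[Num.max/0]_(k < n) (A i k * B k j).

Definition maxadd (A B : 'M[R]_n) : 'M[R]_n :=
  \matrix_(i, j) Num.max (A i j) (B i j).

Definition maxid : 'M[R]_n := 1%:M.

Fixpoint maxpow (A : 'M[R]_n) (k : nat) : 'M[R]_n :=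
  match k with
  | O => maxid
  | S k' => maxmul A (maxpow A k')
  end.

Definition max_nilpotent (A : 'M[R]_n) : Prop := exists k, maxpow A k = 0.

Definition maxcomm (A B : 'M[R]_n) : 'M[R]_n := maxadd (maxmul A B) (maxmul B A).

Definition max_inverse (P Q : 'M[R]_n) : Prop :=
  nonneg_mx P /\ nonneg_mx Q /\ maxmul P Q = maxid /\ maxmul Q P = maxid.

Definition upper_triangular (M : 'M[R]_n) : Prop :=
  forall i j : 'I_n, (j < i)%N -> M i j = 0.

Definition max_triangularizable (A : 'M[R]_n) : Prop :=
  exists P Q, max_inverse P Q /\ upper_triangular (maxmul (maxmul Q A) P).

Definition max_sim_triangularizable (A B : 'M[R]_n) : Prop :=
  exists P Q, max_inverse P Q /\
    upper_triangular (maxmul (maxmul Q A) P) /\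
    upper_triangular (maxmul (maxmul Q B) P).

End MaxAlgebra.

From mathcomp Require Import all_boot all_order all_algebra.
From mathcomp Require Import fingroup perm.
From mathcomp Require Import reals zify.
Import Order.TTheory GRing.Theory Num.Theory.
Local Open Scope ring_scope.

(* The support of an idempotent matrix is transitive, that of a
   triangularizable one antisymmetric, and that of a nilpotent one acyclic;
   moreover an edge of supp A followed by an edge of supp B, or conversely, is
   an edge of supp C for C = AB ⊕ BA.  By transitivity every walk in
   supp A ∪ supp B reduces to an optional A-step, a chain of BA-steps and an
   optional B-step, so closing it by a non-loop A-edge yields a cycle of
   BA-steps, i.e. a cycle in supp C.  Hence reachability in supp A ∪ supp B is
   a partial order, and numbering the indices along a linear extension of it
   gives one permutation matrix triangularizing both A and B. *)

Section Cycles.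
Context {T : finType}.

Definition on_cycle (e : rel T) x := exists2 y, e x y & connect e y x.

Lemma connect_last {e : rel T} {x y : T} :
  connect e x y -> x = y \/ exists2 z, connect e x z & e z y.
Proof.
case/connectP=> p; elim/last_ind: p y => [|p z _] y /=; first by left.
rewrite rcons_path last_rcons => /andP[x_p e_z] ->; right.
by exists (last x p) => //; apply/connectP; exists p.
Qed.

Lemma on_cycle_succ (e : rel T) x :
  on_cycle e x -> exists2 y, e x y & on_cycle e y.
Proof.
case=> y e_xy /connectP[[|z p] /=] => [_ xy | ].
  by subst x; exists y => //; exists y => //; exact: connect0.
case/andP=> e_yz z_p x_last; exists y => //; exists z => //.
by apply: connect_trans (connect1 e_xy); apply/connectP; exists p.
Qed.

Lemma connect_antisym (e : rel T) :
  (forall x y, e x y -> connect e y x -> x = y) -> antisymmetric (connect e).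
Proof.
move=> e_loop x y /andP[/connectP[p]]; elim: p x => [|z p IHp] x /=.
  by move=> _ ->.
case/andP=> e_xz z_p y_last y_x; have z_x : connect e z x.
  by apply: connect_trans y_x; apply/connectP; exists p.
by rewrite (e_loop _ _ e_xz z_x) in y_x *; apply: IHp.
Qed.

End Cycles.

Section UnionOfOrders.
Context {T : finType} {a b c : rel T}.
Hypotheses (a_trans : transitive a) (b_trans : transitive b).

Let ba : rel T := [rel u v | [exists w, b u w && a w v]].

Lemma connect_relU_split u v : connect (relU a b) u v ->
  exists p q, [/\ u = p \/ a u p, connect ba p q & q = v \/ b q v].
Proof.
case/connectP=> s; elim/last_ind: s v => [|s w IHs] v /=.
  by move=> _ ->; exists u, u; split; [left | exact: connect0 | left].
rewrite rcons_path last_rcons => /andP[u_s e_zw] ->.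
have [p [q [u_p p_q q_z]]] := IHs _ u_s erefl.
set z := last u s in q_z e_zw; case/orP: e_zw => [a_zw|b_zw]; last first.
  by exists p, q; split=> //; right; case: q_z => [->|/b_trans]; last exact.
have p_w : connect ba p w \/ a u w.
  case: q_z => [q_z|b_qz]; last first.
    left; apply: connect_trans p_q (connect1 _); apply/existsP.
    by exists z; rewrite b_qz.
  subst q; case: (connect_last p_q) => [p_z|[t p_t]].
    by right; subst p; case: u_p => [->|/a_trans]; last exact.
  case/existsP=> m /andP[b_tm a_mz].
  left; apply: connect_trans p_t (connect1 _); apply/existsP.
  by exists m; rewrite b_tm; exact: a_trans a_mz a_zw.
case: p_w => [p_w|a_uw]; first by exists p, w; split=> //; left.
by exists w, w; split; [right | exact: connect0 | left].
Qed.

Hypothesis a_anti : antisymmetric a.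
Hypothesis ba_c : forall u v w, b u v -> a v w -> c u w.
Hypothesis c_acyclic : forall x, ~ on_cycle c x.

Lemma relU_cycle_loopl {x y : T} : a x y -> connect (relU a b) y x -> x = y.
Proof.
move=> a_xy /connect_relU_split[p [q [y_p p_q q_x]]].
have a_xp : a x p by case: y_p => [<- // | a_yp]; exact: a_trans a_xy a_yp.
have ba_p t : connect ba p t -> ~ ba t p.
  move=> p_t /existsP[m /andP[b_tm a_mp]]; apply: (c_acyclic t).
  exists p; first exact: ba_c b_tm a_mp.
  apply: connect_sub p_t => u v /existsP[w /andP[b_uw a_wv]].
  by apply: connect1; apply: ba_c b_uw a_wv.
case: q_x => [q_x|b_qx]; last first.
  by case: (ba_p q p_q); apply/existsP; exists x; rewrite b_qx.
subst q; case: (connect_last p_q) => [p_x|[t p_t /existsP[m /andP[b_tm a_mx]]]].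
  by subst p; case: y_p => [//|a_yx]; apply: a_anti; rewrite a_xy a_yx.
case: (ba_p t p_t); apply/existsP; exists m.
by rewrite b_tm; exact: a_trans a_mx a_xp.
Qed.

End UnionOfOrders.

Lemma connect_relU_antisym {T : finType} {a b : rel T} (c : rel T) :
  transitive a -> transitive b -> antisymmetric a -> antisymmetric b ->
  (forall u v w, a u v -> b v w -> c u w) ->
  (forall u v w, b u v -> a v w -> c u w) ->
  (forall x, ~ on_cycle c x) ->
  antisymmetric (connect (relU a b)).
Proof.
move=> a_trans b_trans a_anti b_anti ab_c ba_c c_acyclic.
apply: connect_antisym => x y /orP[a_xy|b_xy] y_x.
  exact: (relU_cycle_loopl a_trans b_trans a_anti ba_c c_acyclic a_xy).
apply: (relU_cycle_loopl b_trans a_trans b_anti ab_c c_acyclic b_xy).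
by rewrite (eq_connect (e' := relU a b)) // => u v /=; rewrite orbC.
Qed.

Section LinearExtension.
Context {n : nat}.

Lemma perm_of_injective_key {key : 'I_n -> nat} : injective key ->
  exists s : 'S_n, {homo s : x y / (key x < key y)%N >-> (x < y)%N}.
Proof.
move=> key_inj; pose below x := [set u | (key u < key x)%N].
have below_lt x : (#|below x| < n)%N.
  suff: (#|below x| < #|[set: 'I_n]|)%N by rewrite cardsT card_ord.
  apply: proper_card; apply/properP.
  by split; [exact: subsetT | exists x; rewrite ?inE ?ltnn].
pose f x := Ordinal (below_lt x).
have f_homo : {homo f : x y / (key x < key y)%N >-> (x < y)%N}.
  move=> x y lt_xy; apply: proper_card; apply/properP; split.
    by apply/subsetP => u; rewrite !inE => /ltn_trans; apply.
  by exists x; rewrite !inE ?ltnn.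
have f_inj : injective f.
  move=> x y fxy.
  by case: (ltngtP (key x) (key y)) => [/f_homo|/f_homo|/key_inj //];
    rewrite fxy ltnn.
by exists (perm f_inj) => x y lt_xy; rewrite !permE; apply: f_homo.
Qed.

(* Sorting by the number of [r]-ancestors, ties broken by the index. *)
Lemma perm_linear_extension (r : rel 'I_n) : antisymmetric (connect r) ->
  exists s : 'S_n, forall x y, r x y -> (s x <= s y)%N.
Proof.
move=> r_anti; pose anc x := #|[set u | connect r u x]|.
have anc_lt x y : r x y -> x != y -> (anc x < anc y)%N.
  move=> r_xy neq_xy; apply: proper_card; apply/properP; split.
    apply/subsetP => u; rewrite !inE => /connect_trans; apply.
    exact: connect1.
  exists y; rewrite !inE ?connect0 //; apply: contra neq_xy => c_yx.
  by apply/eqP/r_anti; rewrite c_yx connect1.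
pose key x := (anc x * n + x)%N.
have key_inj : injective key.
  move=> x y /(congr1 (modn^~ n)); rewrite !modnMDl !modn_small //.
  exact: ord_inj.
have [s s_homo] := perm_of_injective_key key_inj.
exists s => x y r_xy; have [-> //|neq_xy] := eqVneq x y.
apply/ltnW/s_homo; have := anc_lt _ _ r_xy neq_xy; have := ltn_ord x.
rewrite /key; nia.
Qed.

End LinearExtension.

Section MaxAlgebra.
Context {R : realType} {n : nat}.
Implicit Types (A B C M P Q : 'M[R]_n) (s : 'S_n).

Definition mxsupp M : rel 'I_n := [rel u v | 0 < M u v].

Lemma maxmul_ge A B i k j : A i k * B k j <= maxmul A B i j.
Proof. by rewrite mxE; apply: (le_bigmax _ (fun k => A i k * B k j)). Qed.

Lemma maxmul_supp A B u v w :
  mxsupp A u v -> mxsupp B v w -> mxsupp (maxmul A B) u w.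
Proof.
by move=> A_uv B_vw; apply: lt_le_trans (maxmul_ge A B u v w); apply: mulr_gt0.
Qed.

Lemma mxsupp_trans A : maxmul A A = A -> transitive (mxsupp A).
Proof.
by move=> AA v u w A_uv A_vw; rewrite -AA; apply: maxmul_supp A_uv A_vw.
Qed.

Lemma maxcomm_suppl A B u v w :
  mxsupp A u v -> mxsupp B v w -> mxsupp (maxcomm A B) u w.
Proof.
move=> A_uv B_vw; rewrite /mxsupp /= mxE lt_max.
by apply/orP; left; apply: maxmul_supp A_uv B_vw.
Qed.

Lemma maxcomm_suppr A B u v w :
  mxsupp B u v -> mxsupp A v w -> mxsupp (maxcomm A B) u w.
Proof.
move=> B_uv A_vw; rewrite /mxsupp /= mxE lt_max.
by apply/orP; right; apply: maxmul_supp B_uv A_vw.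
Qed.

Lemma maxpow_on_cycle C x :
  on_cycle (mxsupp C) x -> forall k, exists y, 0 < maxpow C k x y.
Proof.
move=> Cx k; elim: k x Cx => [|k IHk] x.
  by exists x; rewrite /= mxE eqxx ltr01.
case/on_cycle_succ=> y C_xy /IHk[z Ck_yz].
by exists z; apply: maxmul_supp C_xy Ck_yz.
Qed.

Lemma max_nilpotent_acyclic C x : max_nilpotent C -> ~ on_cycle (mxsupp C) x.
Proof. by case=> k Ck0 /maxpow_on_cycle/(_ k)[y]; rewrite Ck0 mxE ltxx. Qed.

Lemma bigmax_gt0 (F : 'I_n -> R) :
  0 < \big[Num.max/0]_k F k -> exists k, 0 < F k.
Proof.
move=> gt0; apply/existsP; apply: contraTT gt0 => /existsPn F_le0.
by rewrite -leNgt; apply: bigmax_le => // k _; rewrite leNgt F_le0.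
Qed.

Lemma bigmax_delta k0 (F : 'I_n -> R) :
  0 <= F k0 -> (forall k, k != k0 -> F k = 0) -> \big[Num.max/0]_k F k = F k0.
Proof.
move=> F0 Fk; apply/le_anti; rewrite le_bigmax andbT.
by apply: bigmax_le => // k _; have [-> //|/Fk ->] := eqVneq k k0.
Qed.

Lemma max_inverse_diag {P Q} x :
  max_inverse P Q -> exists k, 0 < P x k /\ 0 < Q k x.
Proof.
case=> nP [nQ [PQ _]]; have : 0 < maxmul P Q x x by rewrite PQ mxE eqxx ltr01.
rewrite mxE => /bigmax_gt0[k].
rewrite lt0r mulf_eq0 negb_or => /andP[/andP[Pk Qk] _].
by exists k; rewrite !lt0r Pk Qk nP nQ.
Qed.

Lemma upper_triangular_supp M k l :
  upper_triangular M -> mxsupp M k l -> (k <= l)%N.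
Proof.
move=> UM; rewrite leqNgt; apply: contraL => /UM M_kl.
by rewrite /mxsupp /= M_kl ltxx.
Qed.

Lemma max_triangularizable_antisym A :
  max_triangularizable A -> antisymmetric (mxsupp A).
Proof.
case=> P [Q [PQinv UT]] u v /andP[A_uv A_vu].
have [ku [Pu Qu]] := max_inverse_diag u PQinv.
have [kv [Pv Qv]] := max_inverse_diag v PQinv.
have le_k x y kx ky : 0 < Q kx x -> mxsupp A x y -> 0 < P y ky -> (kx <= ky)%N.
  move=> Qx A_xy Py; apply: upper_triangular_supp UT _.
  by apply: maxmul_supp Py; apply: maxmul_supp Qx A_xy.
have eq_k : ku = kv by apply/ord_inj/anti_leq; rewrite (le_k u v) ?(le_k v u).
have : 0 < maxmul P Q u v by apply: maxmul_supp Pu _; rewrite /= eq_k.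
case: PQinv => _ [_ [-> _]]; rewrite mxE ltr0n lt0b => /eqP //.
Qed.

Lemma maxmul_perm_mxl s M :
  nonneg_mx M -> maxmul (perm_mx s) M = row_perm s M.
Proof.
move=> nM; apply/matrixP => i j.
rewrite !mxE (bigmax_delta (s i)) ?mxE ?eqxx ?mul1r //.
by move=> k; rewrite !mxE eq_sym => /negbTE ->; rewrite mul0r.
Qed.

Lemma maxmul_perm_mxr s M :
  nonneg_mx M -> maxmul M (perm_mx s) = col_perm s^-1 M.
Proof.
move=> nM; apply/matrixP => i j.
rewrite !mxE (bigmax_delta ((s^-1)%g j)) ?mxE ?permKV ?eqxx ?mulr1 //.
move=> k; rewrite !mxE => neq_k.
have -> : (s k == j) = false by apply: contraNF neq_k => /eqP <-; rewrite permK.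
by rewrite mulr0.
Qed.

Lemma perm_mx_nonneg s : nonneg_mx (perm_mx s : 'M[R]_n).
Proof. by move=> i j; rewrite !mxE ler0n. Qed.

Lemma maxmul_perm_mxV s : maxmul (perm_mx s) (perm_mx s^-1) = 1%:M :> 'M[R]_n.
Proof.
rewrite maxmul_perm_mxl; last exact: perm_mx_nonneg.
by rewrite row_permE -perm_mxM mulgV perm_mx1.
Qed.

Lemma max_inverse_perm_mx s : max_inverse (perm_mx s : 'M[R]_n) (perm_mx s^-1).
Proof.
split; [exact: perm_mx_nonneg | split; [exact: perm_mx_nonneg | split]].
  exact: maxmul_perm_mxV.
by rewrite -{2}[s]invgK maxmul_perm_mxV.
Qed.

Lemma upper_triangular_perm_conj s M : nonneg_mx M ->
  (forall u v, mxsupp M u v -> (s u <= s v)%N) ->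
  upper_triangular (maxmul (maxmul (perm_mx s^-1) M) (perm_mx s)).
Proof.
move=> nM s_homo i j lt_ji.
have nsM : nonneg_mx (row_perm s^-1 M) by move=> ? ?; rewrite mxE.
rewrite maxmul_perm_mxl // maxmul_perm_mxr // !mxE.
apply/le_anti; rewrite nM andbT leNgt; apply/negP => /s_homo.
by rewrite !permKV leqNgt lt_ji.
Qed.

Lemma max_sim_triangularizable_of_antisym A B : nonneg_mx A -> nonneg_mx B ->
  antisymmetric (connect (relU (mxsupp A) (mxsupp B))) ->
  max_sim_triangularizable A B.
Proof.
move=> nA nB /perm_linear_extension[s s_homo].
exists (perm_mx s), (perm_mx s^-1); split; first exact: max_inverse_perm_mx.
by split; apply: upper_triangular_perm_conj => // u v supp_uv;
  apply: s_homo; rewrite /= supp_uv ?orbT.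
Qed.

End MaxAlgebra.

Theorem theorem3p12 (R : realType) (n : nat) (A B : 'M[R]_n) :
  nonneg_mx A -> nonneg_mx B ->
  max_triangularizable A -> max_triangularizable B ->
  maxmul A A = A -> maxmul B B = B ->
  max_nilpotent (maxcomm A B) ->
  max_sim_triangularizable A B.
Proof.
move=> nA nB triA triB AA BB nilC.
apply: max_sim_triangularizable_of_antisym => //.
apply: (connect_relU_antisym (mxsupp (maxcomm A B))).
- exact: mxsupp_trans AA.
- exact: mxsupp_trans BB.
- exact: max_triangularizable_antisym triA.
- exact: max_triangularizable_antisym triB.
- exact: maxcomm_suppl.
- exact: maxcomm_suppr.
- by move=> x; apply: max_nilpotent_acyclic nilC.
Qed.
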